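(* Let $A$ be a subring of $\mathbb{R}$ and let $P_A$ be as in the context. (1) If $A$ has a unit $c\neq\pm1$, then $\infty\in P_A$. (2) If the only units of $A$ are $\pm1$, then $\infty\notin P_A$.
   Context: $PSL_2(A)$ acts on $\mathbb{R}\cup\{\infty\}$ by Möbius transformations $t\mapsto(at+b)/(ct+d)$. An element is hyperbolic if the absolute value of its trace exceeds $2$. $P_A\subseteq\mathbb{R}\cup\{\infty\}$ denotes the set of fixed points of hyperbolic elements of $PSL_2(A)$. *)

From HB Require Import structures.
From mathcomp Require Import all_boot all_order all_algebra.
From mathcomp Require Import Rstruct.
From Stdlib Require Import Reals.
Set Implicit Arguments. Unset Strict Implicit. Unset Printing Implicit Defensive.
Import Order.TTheory GRing.Theory Num.Theory.
Local Open Scope ring_scope.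

Definition is_subring (A : {pred R}) : Prop :=
  [/\ (1 : R) \in A,
      (forall x y, x \in A -> y \in A -> x - y \in A) &
      (forall x y, x \in A -> y \in A -> x * y \in A)].

Definition unit_of (A : {pred R}) (u : R) : Prop :=
  u \in A /\ exists v, v \in A /\ u * v = 1.

(* The extended real line R ∪ {∞}: None stands for ∞. *)
Notation projR := (option R).

Definition mobius (M : 'M[R]_2) (t : projR) : projR :=
  let a := M ord0 ord0 in let b := M ord0 ord_max in
  let c := M ord_max ord0 in let d := M ord_max ord_max in
  match t with
  | None => if c == 0 then None else Some (a / c)
  | Some x => if c * x + d == 0 then None else Some ((a * x + b) / (c * x + d))
  end.

(* Matrices of SL_2(A).  PSL_2(A) = SL_2(A)/{±1}; since M and -M have the same
   Möbius action and the same |trace|, we quantify over representatives in SL_2(A). *)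
Definition in_SL2 (A : {pred R}) (M : 'M[R]_2) : Prop :=
  (forall i j, M i j \in A) /\ \det M = 1.

Definition hyperbolic (M : 'M[R]_2) : Prop := 2 < `|\tr M|.

Definition P_A (A : {pred R}) (t : projR) : Prop :=
  exists M : 'M[R]_2, in_SL2 A M /\ hyperbolic M /\ mobius M t = t.

From HB Require Import structures.
From mathcomp Require Import all_boot all_order all_algebra.
From mathcomp Require Import Rstruct.
From Stdlib Require Import Reals.
From mathcomp Require Import ring lra.
Import Order.TTheory GRing.Theory Num.Theory.
Local Open Scope ring_scope.

(* An element of PSL_2 fixes oo exactly when it is upper triangular; its
   diagonal entries a, d then satisfy a d = 1, so they are units of A.  If A
   has a unit c <> 1, -1, then diag(c, c^-1) is hyperbolic, because
   (c + c^-1)^2 - 4 = (c - c^-1)^2 > 0.  If the only units are 1, -1, then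
   a = d = +-1 and the trace is +-2. *)

Lemma det_mx2 (K : comPzRingType) (M : 'M[K]_2) :
  \det M = M ord0 ord0 * M ord_max ord_max - M ord0 ord_max * M ord_max ord0.
Proof.
rewrite (expand_det_row _ ord0) !big_ord_recl big_ord0 addr0.
rewrite /cofactor !det_mx11 /= !mxE /=.
have lift_ord2 (j : 'I_2) (i : 'I_1) :
    lift j i = if j == ord0 then ord_max else ord0.
  by apply/val_inj; rewrite /= /bump (ord1 i); case: j => [[|[|k]] ?] //=.
by rewrite !lift_ord2 /= expr0 expr1 mul1r mulN1r mulrN.
Qed.

Lemma mxtrace_mx2 (K : pzRingType) (M : 'M[K]_2) :
  \tr M = M ord0 ord0 + M ord_max ord_max.
Proof.
rewrite /mxtrace !big_ord_recl big_ord0 addr0.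
by have -> : (lift ord0 ord0 : 'I_2) = ord_max by apply/val_inj.
Qed.

Definition diag_mx2 {K : pzRingType} (a d : K) : 'M[K]_2 :=
  \matrix_(i, j) (if i == j then (if i == ord0 then a else d) else 0).

Lemma mobius_fix_infty (M : 'M[R]_2) :
  mobius M None = None <-> M ord_max ord0 = 0.
Proof. by rewrite /mobius; case: eqP. Qed.

Lemma subring0 (A : {pred R}) : is_subring A -> 0 \in A.
Proof. by case=> A1 AB _; rewrite -(subrr 1) AB. Qed.

Lemma ltr_norm_add_inv {F : realFieldType} (c v : F) :
  c * v = 1 -> c != 1 -> c != -1 -> 2 < `|c + v|.
Proof.
move=> cv c1 cN1.
have cNv : c != v.
  apply/eqP => cEv; move: cv; rewrite -cEv -expr2 => /eqP.
  by rewrite sqrf_eq1 (negPf c1) (negPf cN1).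
have : 0 < (c - v) ^+ 2 by rewrite exprn_even_gt0 // subr_eq0.
rewrite ltr_normr; apply: contraTT; rewrite negb_or -!leNgt => /andP [h1 h2].
nra.
Qed.

Lemma norm_add_inv_sign {F : realDomainType} (a d : F) :
  a * d = 1 -> a = 1 \/ a = -1 -> `|a + d| = 2.
Proof.
move=> ad [a1|aN1]; move: ad.
- by rewrite a1 mul1r => ->; rewrite ger0_norm ?addr_ge0 // -mulr2n.
- rewrite aN1 mulN1r => /eqP; rewrite eqr_oppLR => /eqP ->.
  by rewrite -opprD normrN ger0_norm ?addr_ge0 // -mulr2n.
Qed.

Lemma P_A_infty_of_unit {A : {pred R}} {c : R} :
  is_subring A -> unit_of A c -> c <> 1 -> c <> -1 -> P_A A None.
Proof.
move=> hA [cA [v [vA cv]]] /eqP c1 /eqP cN1.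
exists (diag_mx2 c v); split; [split|split].
- by move=> i j; rewrite mxE; case: eqP => _; [case: eqP|exact: subring0].
- by rewrite det_mx2 !mxE /= mulr0 subr0.
- by rewrite /hyperbolic mxtrace_mx2 !mxE; exact: ltr_norm_add_inv.
- by apply/mobius_fix_infty; rewrite mxE.
Qed.

Lemma not_P_A_infty (A : {pred R}) :
  (forall u : R, unit_of A u -> u = 1 \/ u = -1) -> ~ P_A A None.
Proof.
move=> units_sign [M [[MA detM] [hypM /mobius_fix_infty c0]]].
have ad : M ord0 ord0 * M ord_max ord_max = 1.
  by rewrite -detM det_mx2 c0 mulr0 subr0.
have a_unit : unit_of A (M ord0 ord0).
  by split; [exact: MA|exists (M ord_max ord_max)].
move: hypM; rewrite /hyperbolic mxtrace_mx2.
by rewrite (norm_add_inv_sign _ _ ad (units_sign _ a_unit)) ltxx.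
Qed.

Theorem mainTheorem11 (A : {pred R}) (hA : is_subring A) :
  ((exists c : R, unit_of A c /\ c <> 1 /\ c <> -1) -> P_A A None) /\
  ((forall u : R, unit_of A u -> u = 1 \/ u = -1) -> ~ P_A A None).
Proof.
split.
- by move=> [c [cU [c1 cN1]]]; apply: (P_A_infty_of_unit hA cU).
- exact: not_P_A_infty.
Qed.
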